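(* Let $f\in\mathbb{Z}[X]$ have degree $n\ge1$ and let $g\in\mathbb{Q}[X]$ be a nonzero divisor of $f$ in $\mathbb{Q}[X]$. Then $\Phi(g):=fg'/g$ lies in $\mathbb{Z}[X]$, has degree less than $n$, and $$\|\Phi(g)\|\le B(f):=2^{n-1}\,n\,\|f\|.$$
   Context: $\|\cdot\|$ denotes the $L^2$ norm of the coefficient vector of a polynomial. *)

From mathcomp Require Import all_boot all_order all_algebra.
Set Implicit Arguments. Unset Strict Implicit. Unset Printing Implicit Defensive.
Import Order.TTheory GRing.Theory Num.Theory.
Local Open Scope ring_scope.

Definition poly_norm2 (R : rcfType) (p : {poly int}) : R :=
  Num.sqrt (\sum_(i < size p) ((p`_i)%:~R : R) ^+ 2).

Definition Phi (f : {poly int}) (g : {poly rat}) : {poly rat} :=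
  (map_poly (intr : int -> rat) f * g^`()) %/ g.

(* By Gauss's lemma f = p r in Z[X] with g a rational multiple of p, so that
   Phi(g) = r p'.  Over an algebraically closed field p and r split into linear
   factors; expanding p' by Leibniz bounds the l^1 norm of r p' by
   n 2^(n-1) |lc f| prod_z max(1, |z|), the product running over the roots of f,
   and Landau's inequality bounds this Mahler measure by the L^2 norm of f. *)
From mathcomp Require Import all_boot all_order all_algebra.
From mathcomp Require Import algC ring.
Import Order.TTheory GRing.Theory Num.Theory.
Local Open Scope ring_scope.

Definition norm1 {R : numDomainType} (p : {poly R}) : R :=
  \sum_(i < size p) `|p`_i|.

Definition sqnorm {R : numDomainType} (p : {poly R}) : R :=
  \sum_(i < size p) `|p`_i| ^+ 2.

Section CoefficientNorms.
Variable R : numDomainType.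
Implicit Types (p q : {poly R}) (c : R).

Lemma sum_coef_widen (G : R -> R) p N : G 0 = 0 -> (size p <= N)%N ->
  \sum_(i < size p) G p`_i = \sum_(i < N) G p`_i.
Proof.
move=> G0 le_pN; rewrite -!(big_mkord xpredT (fun i => G p`_i)).
rewrite (big_cat_nat (leq0n _) le_pN) /= [X in _ + X]big1_seq ?addr0 // => i.
by rewrite mem_index_iota => /andP[_ /andP[le_pi _]]; rewrite nth_default.
Qed.

Lemma norm1E p N : (size p <= N)%N -> norm1 p = \sum_(i < N) `|p`_i|.
Proof. by move=> le_pN; rewrite /norm1 (@sum_coef_widen (fun x => `|x|) p N) ?normr0. Qed.

Lemma sqnormE p N : (size p <= N)%N -> sqnorm p = \sum_(i < N) `|p`_i| ^+ 2.
Proof.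
by move=> le_pN; rewrite /sqnorm (@sum_coef_widen (fun x => `|x| ^+ 2) p N) ?normr0 ?expr0n.
Qed.

Lemma norm1_ge0 p : 0 <= norm1 p.
Proof. exact: sumr_ge0. Qed.

Lemma norm1_1 : norm1 (1 : {poly R}) = 1.
Proof. by rewrite /norm1 size_poly1 big_ord1 coefC normr1. Qed.

Lemma norm1D p q : norm1 (p + q) <= norm1 p + norm1 q.
Proof.
set N := maxn (size p) (size q).
rewrite (@norm1E _ N) ?(leq_trans (size_polyD _ _)) //.
rewrite (@norm1E p N) ?leq_maxl // (@norm1E q N) ?leq_maxr // -big_split /=.
by apply: ler_sum => i _; rewrite coefD ler_normD.
Qed.

Lemma norm1N p : norm1 (- p) = norm1 p.
Proof. by rewrite /norm1 size_polyN; apply: eq_bigr => i _; rewrite coefN normrN. Qed.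

Lemma norm1Z c p : norm1 (c *: p) = `|c| * norm1 p.
Proof.
rewrite (@norm1E _ (size p)) ?size_scale_leq // /norm1 mulr_sumr.
by apply: eq_bigr => i _; rewrite coefZ normrM.
Qed.

Lemma norm1_mulX p : norm1 ('X * p) = norm1 p.
Proof.
rewrite (@norm1E _ (size p).+1); last first.
  by rewrite (leq_trans (size_polyMleq _ _)) // size_polyX.
by rewrite big_ord_recl coefXM normr0 add0r; apply: eq_bigr => i _; rewrite coefXM.
Qed.

Lemma norm1_mulXsubC z p : norm1 (('X - z%:P) * p) <= (1 + `|z|) * norm1 p.
Proof.
by rewrite mulrBl mul_polyC mulrDl mul1r (le_trans (norm1D _ _)) // norm1N norm1_mulX norm1Z.
Qed.

Lemma sqnorm_le_norm1 p : sqnorm p <= norm1 p ^+ 2.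
Proof.
rewrite /sqnorm /norm1; elim: (size p) => [|m IHm]; first by rewrite !big_ord0 expr0n.
rewrite !big_ord_recr /= sqrrD (le_trans (lerD IHm (lexx _))) // lerD2r lerDl.
by rewrite mulrn_wge0 // mulr_ge0 // sumr_ge0.
Qed.

Lemma sqnorm_ge_lead p : `|lead_coef p| ^+ 2 <= sqnorm p.
Proof.
rewrite lead_coefE /sqnorm; case size_p: (size p) => [|m] /=.
  by rewrite nth_default ?size_p // normr0 expr0n big_ord0.
by rewrite big_ord_recr lerDr sumr_ge0 // => i _; rewrite exprn_ge0.
Qed.

End CoefficientNorms.

Section Landau.
Variable C : numClosedFieldType.
Implicit Types (p q : {poly C}) (s t : seq C).

Local Notation prodXsubC s := (\prod_(z <- s) ('X - z%:P)).

Definition max1_norm (z : C) : C := if `|z| <= 1 then 1 else `|z|.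

Lemma max1_norm_ge1 z : 1 <= max1_norm z.
Proof.
by rewrite /max1_norm; case: ifP => // /negbT; rewrite -real_ltNge ?normr_real // => /ltW.
Qed.

Lemma max1_norm_ge_norm z : `|z| <= max1_norm z.
Proof. by rewrite /max1_norm; case: ifP. Qed.

Lemma prod_max1_norm_ge1 s : 1 <= \prod_(z <- s) max1_norm z.
Proof.
elim: s => [|z s IHs]; first by rewrite big_nil.
by rewrite big_cons mulr_ege1 ?max1_norm_ge1.
Qed.

Lemma prod_max1_norm_ge0 s : 0 <= \prod_(z <- s) max1_norm z.
Proof. exact: le_trans ler01 (prod_max1_norm_ge1 s). Qed.

Lemma norm1_prod_XsubC s : norm1 (prodXsubC s) <= 2 ^+ size s * \prod_(z <- s) max1_norm z.
Proof.
elim: s => [|z s IHs]; first by rewrite !big_nil norm1_1 mulr1.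
rewrite !big_cons (le_trans (norm1_mulXsubC _ _ _)) // exprS mulrACA.
apply: ler_pM; rewrite ?addr_ge0 ?norm1_ge0 //.
by rewrite mulr2n mulrDl mul1r lerD ?max1_norm_ge1 ?max1_norm_ge_norm.
Qed.

(* Leibniz: [(z :: s)] contributes [prodXsubC s] plus [('X - z) (prodXsubC s)^`()];
   both pieces are products of [size s + size t] linear factors. *)
Lemma norm1_mul_deriv_prod s t :
  norm1 (prodXsubC t * (prodXsubC s)^`())
  <= (size s)%:R * 2 ^+ (size s + size t).-1 * \prod_(z <- s ++ t) max1_norm z.
Proof.
elim: s t => [|z s IHs] t.
  by rewrite big_nil derivC mulr0 /norm1 size_poly0 big_ord0 !mul0r.
rewrite big_cons derivM derivXsubC mul1r mulrDr mulrA (le_trans (norm1D _ _ _)) //.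
have ->: prodXsubC t * ('X - z%:P) = prodXsubC (z :: t) by rewrite big_cons mulrC.
rewrite -big_cat (le_trans (lerD (norm1_prod_XsubC _) (IHs _))) //=.
have perm_zst : perm_eq (s ++ z :: t) (z :: s ++ t) by rewrite -cat1s perm_catCA.
rewrite (perm_big _ perm_zst) (perm_big (s ++ t) (permEl (perm_catC t s))) big_cons.
rewrite addnS /= size_cat addnC -[(size s).+1%:R]natr1 mulrDl mulrDl mul1r addrC lerD2l.
by rewrite ler_wpM2l ?exprn_ge0 // ler_peMl ?prod_max1_norm_ge0 ?max1_norm_ge1.
Qed.

Lemma sqnorm_mulXsubC_reflect a p :
  sqnorm (('X - a%:P) * p) = sqnorm ((a^* *: 'X - 1) * p).
Proof.
have reflect_id (x y : C) :
    `|x - a * y| ^+ 2 - `|a^* * x - y| ^+ 2 = (1 - a * a^*) * (`|x| ^+ 2 - `|y| ^+ 2).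
  by rewrite !normCK !rmorphB !rmorphM /= conjCK; ring.
have le_Xp : (size ('X * p)%R <= (size p).+1)%N.
  by rewrite (leq_trans (size_polyMleq _ _)) // size_polyX.
rewrite mulrBl mul_polyC mulrBl mul1r -scalerAl.
rewrite (@sqnormE _ _ (size p).+1); last first.
  rewrite (leq_trans (size_polyD _ _)) // size_polyN geq_max le_Xp.
  by rewrite (leq_trans (size_scale_leq _ _)).
rewrite (@sqnormE _ _ (size p).+1); last first.
  rewrite (leq_trans (size_polyD _ _)) // size_polyN geq_max leqnSn.
  by rewrite (leq_trans (size_scale_leq _ _)).
apply/eqP; rewrite -subr_eq0 -sumrB.
under eq_bigr => i _ do rewrite !coefB !coefZ reflect_id.
(* the remaining sum telescopes: the coefficients of ['X * p] are those of [p] shifted *)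
rewrite -mulr_sumr sumrB big_ord_recl big_ord_recr /= !coefXM normr0 expr0n /= add0r.
rewrite [p`_(size p)]nth_default // normr0 expr0n addr0.
by under eq_bigr => i _ do rewrite coefXM /=; rewrite subrr mulr0.
Qed.

Definition landau_factor (z : C) : {poly C} :=
  if `|z| <= 1 then 'X - z%:P else z^* *: 'X - 1.

Lemma lead_coef_landau_factor z : `|lead_coef (landau_factor z)| = max1_norm z.
Proof.
rewrite /landau_factor /max1_norm; case: ifP => [_|le_z1].
  by rewrite lead_coefXsubC normr1.
have z0 : z^* != 0 by apply: contraFneq le_z1; rewrite -norm_conjC => ->; rewrite normr0 ler01.
have ->: z^* *: 'X - 1 = z^* *: ('X - (z^*)^-1%:P) by rewrite scalerBr scale_polyC divff.
by rewrite lead_coefZ lead_coefXsubC mulr1 norm_conjC.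
Qed.

Lemma sqnorm_prod_landau_factor s p :
  sqnorm (p * prodXsubC s) = sqnorm (p * \prod_(z <- s) landau_factor z).
Proof.
elim: s p => [|z s IHs] p; first by rewrite !big_nil.
rewrite !big_cons; set L := \prod_(j <- s) landau_factor j.
have ->: p * (('X - z%:P) * prodXsubC s) = p * ('X - z%:P) * prodXsubC s by exact: mulrA.
have ->: p * (landau_factor z * L) = landau_factor z * (p * L) by exact: mulrCA.
rewrite IHs -/L -mulrA mulrCA /landau_factor.
by case: ifP => // _; exact: sqnorm_mulXsubC_reflect.
Qed.

(* Landau: reflecting the roots outside the unit disc does not change the
   coefficient norm and makes the leading coefficient the Mahler measure. *)
Lemma landau_inequality c s :
  (`|c| * \prod_(z <- s) max1_norm z) ^+ 2 <= sqnorm (c *: prodXsubC s).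
Proof.
rewrite -mul_polyC sqnorm_prod_landau_factor (le_trans _ (sqnorm_ge_lead _ _)) //.
rewrite lead_coefM lead_coefC lead_coef_prod normrM normr_prod.
by under [X in _ <= (_ * X) ^+ 2]eq_bigr => z _ do rewrite lead_coef_landau_factor.
Qed.

Lemma sqnorm_mul_deriv p q n : size (p * q) = n.+1 ->
  sqnorm (q * p^`()) <= (n%:R * 2 ^+ n.-1) ^+ 2 * sqnorm (p * q).
Proof.
have [s Ep] := closed_field_poly_normal p; have [t Eq] := closed_field_poly_normal q.
set d := lead_coef p in Ep; set e := lead_coef q in Eq.
have Epq : p * q = (d * e) *: prodXsubC (s ++ t).
  by rewrite {1}Ep {1}Eq -scalerAl -scalerAr scalerA big_cat.
have Eqp' : q * p^`() = (d * e) *: (prodXsubC t * (prodXsubC s)^`()).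
  by rewrite {1}Ep {1}Eq derivZ -scalerAl -scalerAr scalerA mulrC.
move=> size_pq; have de0 : d * e != 0.
  by rewrite -lead_coefM lead_coef_eq0 -size_poly_gt0 size_pq.
have n_st : (size s + size t)%N = n.
  by move: size_pq; rewrite Epq size_scale // size_prod_XsubC size_cat => -[].
set M := \prod_(z <- s ++ t) max1_norm z; set K : C := n%:R * 2 ^+ n.-1.
have K0 : 0 <= K by rewrite mulr_ge0 ?ler0n ?exprn_ge0.
rewrite Eqp' Epq; apply: le_trans (sqnorm_le_norm1 _ _) _.
rewrite (le_trans _ (ler_wpM2l (exprn_ge0 2 K0) (landau_inequality _ _))) // -exprMn.
rewrite lerXn2r ?nnegrE ?norm1_ge0 ?mulr_ge0 ?normr_ge0 ?prod_max1_norm_ge0 ?exprn_ge0 //.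
rewrite norm1Z (le_trans (ler_wpM2l (normr_ge0 _) (norm1_mul_deriv_prod s t))) // n_st.
rewrite -/M mulrCA ler_wpM2r ?mulr_ge0 ?normr_ge0 ?prod_max1_norm_ge0 //.
by rewrite ler_wpM2r ?exprn_ge0 // ler_nat -n_st leq_addr.
Qed.

End Landau.

Local Notation pZtoQ := (map_poly (intr : int -> rat)).

Lemma sqnorm_map_intr (S : numDomainType) (p : {poly int}) :
  sqnorm (map_poly (intr : int -> S) p) = (sqnorm p)%:~R.
Proof.
rewrite /sqnorm size_map_inj_poly ?rmorph_sum //; last exact: intr_inj.
by apply: eq_bigr => i _; rewrite coef_map /= -intr_norm -rmorphXn.
Qed.

Lemma sqnorm_int_mul_deriv (p q : {poly int}) n : size (p * q) = n.+1 ->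
  sqnorm (q * p^`()) <= (n%:Z * 2 ^+ n.-1) ^+ 2 * sqnorm (p * q).
Proof.
have size_map (r : {poly int}) : size (map_poly (intr : int -> algC) r) = size r.
  by rewrite size_map_inj_poly //; exact: intr_inj.
move=> size_pq; rewrite -(ler_int algC) rmorphM /= -!sqnorm_map_intr.
rewrite !rmorphM /= -deriv_map !rmorphXn /=.
by apply: sqnorm_mul_deriv; rewrite -rmorphM size_map.
Qed.

Lemma poly_norm2E (R : rcfType) (p : {poly int}) :
  poly_norm2 R p = Num.sqrt (sqnorm p)%:~R.
Proof.
rewrite -sqnorm_map_intr /poly_norm2 /sqnorm size_map_inj_poly; [|exact: intr_inj|by []].
by congr Num.sqrt; apply: eq_bigr => i _; rewrite coef_map /= real_normK ?realz.
Qed.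

Lemma poly_norm2_le (R : rcfType) (p q : {poly int}) (k : int) : 0 <= k ->
  sqnorm p <= k ^+ 2 * sqnorm q -> poly_norm2 R p <= k%:~R * poly_norm2 R q.
Proof.
move=> k0 le_pq; rewrite !poly_norm2E.
have le_sq : (sqnorm p)%:~R <= (k ^+ 2 * sqnorm q)%:~R :> R by rewrite ler_int.
have := ler_wsqrtr le_sq; rewrite rmorphM rmorphXn sqrtrM ?exprn_ge0 ?ler0z //.
by rewrite sqrtr_sqr ger0_norm ?ler0z.
Qed.

Lemma size_mul_deriv_lt (R : idomainType) (p q : {poly R}) :
  p != 0 -> q != 0 -> (size (q * p^`())%R < size (p * q)%R)%N.
Proof.
move=> p0 q0; rewrite (leq_ltn_trans (size_polyMleq _ _)) // size_mul //.
move: (lt_size_deriv p0); rewrite -size_poly_gt0 in q0.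
by case: (size q) q0 => // m _; rewrite addnS addSn /= addnC ltn_add2r.
Qed.

Lemma Phi_mul_scale (p r : {poly int}) (a : rat) : a != 0 -> p != 0 ->
  Phi (p * r) (a *: pZtoQ p) = pZtoQ (r * p^`()).
Proof.
move=> a0 p0; rewrite /Phi rmorphM /= derivZ deriv_map.
have ->: pZtoQ p * pZtoQ r * (a *: pZtoQ p^`()) = a *: (pZtoQ (r * p^`()) * pZtoQ p).
  by rewrite rmorphM -scalerAr; congr (_ *: _); ring.
rewrite divpZr // divpZl mulpK ?scalerA ?mulVf ?scale1r //.
by rewrite map_poly_eq0_id0 ?intr_eq0 ?lead_coef_eq0.
Qed.

Theorem corollary4p2 (R : rcfType) (f : {poly int}) (n : nat) (g : {poly rat}) :
  (1 <= n)%N -> size f = n.+1 -> g != 0 ->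
  g %| map_poly (intr : int -> rat) f ->
  exists h : {poly int},
    [/\ map_poly (intr : int -> rat) h = Phi f g,
        (size h <= n)%N &
        poly_norm2 R h <= 2 ^+ n.-1 * n%:R * poly_norm2 R f].
Proof.
move=> _ size_f g0 /dvdpP_rat_int[p [a a0 Eg] [r Ef]]; subst f g.
have p0 : p != 0 by apply: contraNneq g0 => ->; rewrite rmorph0 scaler0.
have r0 : r != 0 by apply: contra_eq_neq size_f => ->; rewrite mulr0 size_poly0.
exists (r * p^`()); split.
- by rewrite Phi_mul_scale.
- by rewrite -ltnS -size_f size_mul_deriv_lt.
- have ->: 2 ^+ n.-1 * n%:R = (n%:Z * 2 ^+ n.-1)%:~R :> R.
    by rewrite rmorphM rmorphXn mulrC.
  by apply: poly_norm2_le; rewrite ?mulr_ge0 ?exprn_ge0 ?sqnorm_int_mul_deriv.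
Qed.
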